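(* For $n\in\mathbb{N}$ let $a_n,b_n,c_n,d_n$ be real random variables with $c_n\ge0$, $d_n\ge0$ a.s., and let $(k_n)$ be a deterministic integer sequence with $k_n\to\infty$. Define $X_n=e^{ia_n-c_n}$, $x_n=\mathbb{E}[X_n]$, $Y_n=e^{ib_n-d_n}$, $y_n=\mathbb{E}[Y_n]$, $z_n=\mathbb{E}[X_nY_n]$. If $x_n-1=O(1/k_n)$, $y_n-1=o(1/k_n)$ and $z_n-1=O(1/k_n)$ as $n\to\infty$, then $z_n^{k_n}-x_n^{k_n}=o(1)$. *)

From HB Require Import structures.
From mathcomp Require Import all_boot all_order all_algebra.
From mathcomp Require Import all_classical all_reals all_analysis.
From mathcomp Require Import complex.
Set Implicit Arguments. Unset Strict Implicit. Unset Printing Implicit Defensive.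
Import Order.TTheory GRing.Theory Num.Theory ComplexField.
Local Open Scope classical_set_scope.
Local Open Scope complex_scope.
Local Open Scope ring_scope.

(* Expectation of a complex-valued random variable:
   E[X] = E[Re X] + i E[Im X] (both parts bounded in our use, hence finite). *)
Definition cexpect d (T : measurableType d) (R : realType)
  (P : probability T R) (X : T -> R[i]) : R[i] :=
  Complex (fine ('E_P[fun w => complex.Re (X w)])%E)  
  (fine ('E_P[fun w => complex.Im (X w)])%E).

(* e^{i a - c} for real a, c, written out: e^{-c} (cos a + i sin a). *)
Definition cexpi (R : realType) (a c : R) : R[i] :=
  Complex (expR (- c) * cos a)  (expR (- c) * sin a).

Definition bigO_seq (R : realType) (u : nat -> R[i]) (v : nat -> R) : Prop :=
  exists C : R, \forall n \near \oo, `|u n| <= C%:C * `|(v n)%:C|.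

Definition littleo_seq (R : realType) (u : nat -> R[i]) (v : nat -> R) : Prop :=
  forall eps : R, 0 < eps -> \forall n \near \oo, `|u n| <= eps%:C * `|(v n)%:C|.

From HB Require Import structures.
From mathcomp Require Import all_boot all_order all_algebra.
From mathcomp Require Import all_classical all_reals all_analysis.
From mathcomp Require Import complex.
From mathcomp Require Import ring lra.
Set Implicit Arguments. Unset Strict Implicit. Unset Printing Implicit Defensive.
Import Order.TTheory GRing.Theory Num.Theory ComplexField Normc.
Local Open Scope classical_set_scope.
Local Open Scope ring_scope.
Local Open Scope complex_scope.

(* Write X = 1 + u and Y = 1 + v. As |X|, |Y| <= 1, both u and v lie in the unit disc centred
   at -1, where |u|^2 <= -2 Re u; hence by AM-GM |u v| <= δ (-Re u) + δ^-1 (-Re v) for every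
   δ > 0. Since z - x - (y - 1) = E[u v] and |E f| <= E|f|, taking expectations gives
     |z - x| <= (1 + δ^-1) |y - 1| + δ |x - 1|.
   Finally |x|, |z| <= 1, so |z^k - x^k| <= k |z - x|, which is eventually at most
   (1 + δ^-1) o(1) + δ C; as δ is arbitrary, z^k - x^k = o(1). *)

(* Unqualified [Re] and [Im] would denote the real and imaginary parts of a
   numClosedFieldType. *)
Local Notation Re := complex.Re.
Local Notation Im := complex.Im.

Section ComplexModulus.
Variable R : realType.
Implicit Types (x y : R[i]) (a c : R).

Lemma norm_normc x : `|x| = (normc x)%:C.
Proof. by case: x => ? ?; rewrite normc_def. Qed.

Lemma normc_ge0 x : 0 <= normc x.
Proof. by case: x => ? ?; exact: sqrtr_ge0. Qed.

Lemma normc_sqr x : normc x ^+ 2 = Re x ^+ 2 + Im x ^+ 2.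
Proof. by case: x => a b; rewrite /= sqr_sqrtr ?addr_ge0 ?sqr_ge0. Qed.

Lemma normc_real a : normc a%:C = `|a|.
Proof. by rewrite /= expr0n addr0 sqrtr_sqr. Qed.

Lemma ReD x y : Re (x + y) = Re x + Re y. Proof. by case: x; case: y. Qed.
Lemma ImD x y : Im (x + y) = Im x + Im y. Proof. by case: x; case: y. Qed.
Lemma ReN x : Re (- x) = - Re x. Proof. by case: x. Qed.
Lemma ImN x : Im (- x) = - Im x. Proof. by case: x. Qed.
Lemma ReM x y : Re (x * y) = Re x * Re y - Im x * Im y. Proof. by case: x; case: y. Qed.
Lemma ImM x y : Im (x * y) = Re x * Im y + Im x * Re y. Proof. by case: x; case: y. Qed.

Lemma normc_Re x : `|Re x| <= normc x.
Proof.
by case: x => a b; rewrite -sqrtr_sqr ler_sqrt ?addr_ge0 ?sqr_ge0 // lerDl sqr_ge0.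
Qed.

Lemma normc_Im x : `|Im x| <= normc x.
Proof.
by case: x => a b; rewrite -sqrtr_sqr ler_sqrt ?addr_ge0 ?sqr_ge0 // lerDr sqr_ge0.
Qed.

Lemma normc_cexpi a c : normc (cexpi a c) = expR (- c).
Proof.
apply: (@pexpIrn _ 2) => //; rewrite ?nnegrE ?normc_ge0 ?expR_ge0 //.
by rewrite normc_sqr /= !exprMn -mulrDr cos2Dsin2 mulr1.
Qed.

Lemma normc_cexpi_le1 a c : 0 <= c -> normc (cexpi a c) <= 1.
Proof. by move=> c0; rewrite normc_cexpi expR_le1 oppr_le0. Qed.

Lemma Re_le_normc x : Re x <= normc x.
Proof. exact: le_trans (ler_norm _) (normc_Re _). Qed.

Lemma normc_conj x : normc x^* = normc x.
Proof. by case: x => a b /=; rewrite sqrrN. Qed.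

Lemma Re_conj_mul x : Re (x^* * x) = normc x ^+ 2.
Proof. by rewrite normc_sqr; case: x => a b /=; ring. Qed.

Lemma Re_realM a x : Re (a%:C * x) = a * Re x.
Proof. by rewrite ReM /= mul0r subr0. Qed.

Lemma normc_mul_le_Re (δ : R) (u v : R[i]) : 0 < δ ->
  normc (1 + u) <= 1 -> normc (1 + v) <= 1 ->
  normc (u * v) <= δ * - Re u + δ^-1 * - Re v.
Proof.
move=> δ0 u1 v1.
have disc (w : R[i]) : normc (1 + w) <= 1 -> normc w ^+ 2 <= 2 * - Re w.
  move=> w1; have : normc (1 + w) ^+ 2 <= 1 by apply: exprn_ile1 => //; exact: normc_ge0.
  rewrite !normc_sqr ReD ImD /=; lra.
have hu := disc _ u1; have hv := disc _ v1.
rewrite normcM -(ler_pM2l δ0) mulrDr !mulrA mulfV ?gt_eqF // mul1r.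
have := sqr_ge0 (δ * normc u - normc v); nra.
Qed.

End ComplexModulus.

Section ComplexExpectation.
Context d (T : measurableType d) (R : realType) (P : probability T R).
Implicit Types (f g : T -> R[i]) (h : T -> R).

Definition bounded_measurable h :=
  measurable_fun setT h /\ exists M : R, forall w, `|h w| <= M.

Lemma bounded_measurable_integrable h :
  bounded_measurable h -> P.-integrable setT (EFin \o h).
Proof.
move=> [mh [M hM]]; apply: measurable_bounded_integrable => //.
  by rewrite (le_lt_trans (probability_le1 P measurableT)) ?ltry.
exists M; split; first exact: num_real.
by move=> N MN w _; exact: le_trans (hM w) (ltW MN).
Qed.

Lemma bounded_measurableZ (r : R) h :
  bounded_measurable h -> bounded_measurable (fun w => r * h w).
Proof.
move=> [mh [M hM]]; split; first exact: measurable_realfun.measurable_funM.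
by exists (`|r| * M) => w; rewrite normrM ler_wpM2l.
Qed.

Lemma Rintegral_cst_prob (r : R) : \int[P]_(w in setT) r = r.
Proof.
rewrite Rintegral_cst // -[RHS]mulr1; congr (_ * _).
by rewrite -[RHS]/(fine 1%E); congr fine; exact: probability_setT.
Qed.

Definition cmeasurable f :=
  measurable_fun setT (fun w => Re (f w)) /\ measurable_fun setT (fun w => Im (f w)).

Definition cbounded f := cmeasurable f /\ exists M : R, forall w, normc (f w) <= M.

Lemma cbounded_Re f : cbounded f -> bounded_measurable (fun w => Re (f w)).
Proof.
by move=> [[mRe _] [M hM]]; split=> //; exists M => w; rewrite (le_trans (normc_Re _)).
Qed.

Lemma cbounded_Im f : cbounded f -> bounded_measurable (fun w => Im (f w)).
Proof.
by move=> [[_ mIm] [M hM]]; split=> //; exists M => w; rewrite (le_trans (normc_Im _)).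
Qed.

Lemma cbounded_cst (u : R[i]) : cbounded (fun _ => u).
Proof. by split; [split; exact: measurable_cst | exists (normc u)]. Qed.

Lemma cboundedD f g : cbounded f -> cbounded g -> cbounded (fun w => f w + g w).
Proof.
move=> [[mRf mIf] [M hM]] [[mRg mIg] [N hN]]; split.
  by split; [under eq_fun do rewrite ReD | under eq_fun do rewrite ImD];
    exact: measurable_realfun.measurable_funD.
by exists (M + N) => w; rewrite (le_trans (le_normcD _ _)) ?lerD.
Qed.

Lemma cboundedN f : cbounded f -> cbounded (fun w => - f w).
Proof.
move=> [[mRf mIf] [M hM]]; split; last by exists M => w; rewrite normcN.
by split; [under eq_fun do rewrite ReN | under eq_fun do rewrite ImN];
  exact: measurableT_comp.
Qed.

Lemma cboundedB f g : cbounded f -> cbounded g -> cbounded (fun w => f w - g w).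
Proof. by move=> bf bg; apply: cboundedD => //; exact: cboundedN. Qed.

Lemma cmeasurableM f g : cmeasurable f -> cmeasurable g -> cmeasurable (fun w => f w * g w).
Proof.
move=> [mRf mIf] [mRg mIg].
split; [under eq_fun do rewrite ReM | under eq_fun do rewrite ImM].
  by apply: measurable_realfun.measurable_funB; exact: measurable_realfun.measurable_funM.
by apply: measurable_realfun.measurable_funD; exact: measurable_realfun.measurable_funM.
Qed.

Lemma cboundedM f g : cbounded f -> cbounded g -> cbounded (fun w => f w * g w).
Proof.
move=> [mf [M hM]] [mg [N hN]]; split; first exact: cmeasurableM.
by exists (M * N) => w; rewrite normcM ler_pM ?normc_ge0.
Qed.

Lemma cmeasurable_cexpi (a c : T -> R) :
  measurable_fun setT a -> measurable_fun setT c -> cmeasurable (fun w => cexpi (a w) (c w)).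
Proof.
move=> ma mc; have mexp : measurable_fun setT (fun w => expR (- c w)).
  apply: measurableT_comp; first exact: measurable_realfun.measurable_expR.
  exact: measurableT_comp.
split; apply: measurable_realfun.measurable_funM => //; apply: measurableT_comp => //.
  exact: measurable_realfun.continuous_measurable_fun (@continuous_cos R).
exact: measurable_realfun.continuous_measurable_fun (@continuous_sin R).
Qed.

Lemma cbounded_cexpi (a c : T -> R) :
  measurable_fun setT a -> measurable_fun setT c -> (forall w, 0 <= c w) ->
  cbounded (fun w => cexpi (a w) (c w)).
Proof.
move=> ma mc c0; split; first exact: cmeasurable_cexpi.
by exists 1 => w; exact: normc_cexpi_le1.
Qed.

Lemma cexpectE f : cexpect P f =
  (\int[P]_(w in setT) Re (f w)) +i* (\int[P]_(w in setT) Im (f w)).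
Proof. by rewrite /cexpect unlock. Qed.

Lemma cexpect_cst (u : R[i]) : cexpect P (fun _ => u) = u.
Proof. by rewrite cexpectE !Rintegral_cst_prob; case: u. Qed.

Lemma cexpectD f g : cbounded f -> cbounded g ->
  cexpect P (fun w => f w + g w) = cexpect P f + cexpect P g.
Proof.
move=> bf bg; rewrite !cexpectE.
under eq_Rintegral do rewrite ReD; under [X in _ +i* X]eq_Rintegral do rewrite ImD.
by rewrite !RintegralD //; apply: bounded_measurable_integrable;
  first [exact: cbounded_Re | exact: cbounded_Im].
Qed.

Lemma cexpectN f : cbounded f -> cexpect P (fun w => - f w) = - cexpect P f.
Proof.
move=> bf; rewrite !cexpectE.
under eq_Rintegral do rewrite ReN -mulN1r; under [X in _ +i* X]eq_Rintegral do rewrite ImN -mulN1r.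
by rewrite !RintegralZl ?mulN1r //; apply: bounded_measurable_integrable;
  first [exact: cbounded_Re | exact: cbounded_Im].
Qed.

Lemma cexpectB f g : cbounded f -> cbounded g ->
  cexpect P (fun w => f w - g w) = cexpect P f - cexpect P g.
Proof. by move=> bf bg; rewrite cexpectD ?cexpectN //; exact: cboundedN. Qed.

Lemma cexpectZ (u : R[i]) f : cbounded f ->
  cexpect P (fun w => u * f w) = u * cexpect P f.
Proof.
move=> bf; rewrite !cexpectE.
under eq_Rintegral do rewrite ReM; under [X in _ +i* X]eq_Rintegral do rewrite ImM.
rewrite RintegralB ?RintegralD ?RintegralZl //; try (
  apply: bounded_measurable_integrable; try apply: bounded_measurableZ;
  first [exact: cbounded_Re | exact: cbounded_Im]).
by case: u => ? ? /=; congr (_ +i* _); ring.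
Qed.

Lemma cexpect_ae f g : cmeasurable f -> cmeasurable g ->
  {ae P, forall w, f w = g w} -> cexpect P f = cexpect P g.
Proof.
move=> [mRf mIf] [mRg mIg] fg; rewrite /cexpect.
congr (fine _ +i* fine _); rewrite unlock; apply: ae_eq_integral => //;
  try exact/measurable_realfun.measurable_EFinP; by apply: filterS fg => w /= ->.
Qed.

Lemma Re_cexpect_le f g : cbounded f -> cbounded g ->
  (forall w, Re (f w) <= Re (g w)) -> Re (cexpect P f) <= Re (cexpect P g).
Proof.
move=> bf bg fg; rewrite !cexpectE /=.
by apply: le_Rintegral => //; apply: bounded_measurable_integrable; exact: cbounded_Re.
Qed.

(* With m := |E f|, m^2 = Re E[(E f)^* f] and Re ((E f)^* f) <= m |f|. *)
Lemma normc_cexpect_le f g : cbounded f -> cbounded g ->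
  (forall w, normc (f w) <= Re (g w)) -> normc (cexpect P f) <= Re (cexpect P g).
Proof.
move=> bf bg fg; set m := normc (cexpect P f).
have Eg0 : 0 <= Re (cexpect P g).
  have := Re_cexpect_le (cbounded_cst 0) bg; rewrite cexpect_cst; apply=> w.
  exact: le_trans (normc_ge0 _) (fg w).
have : m ^+ 2 <= m * Re (cexpect P g).
  rewrite -Re_conj_mul -cexpectZ // -Re_realM -cexpectZ //.
  apply: Re_cexpect_le; try exact: cboundedM (cbounded_cst _) _.
  move=> w; rewrite Re_realM; apply: le_trans (Re_le_normc _) _.
  by rewrite normcM normc_conj ler_wpM2l ?normc_ge0.
have := normc_ge0 (cexpect P f); rewrite -/m; nra.
Qed.

Lemma normc_cexpect_le1 f : cbounded f -> (forall w, normc (f w) <= 1) ->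
  normc (cexpect P f) <= 1.
Proof.
by move=> bf f1; have := normc_cexpect_le bf (cbounded_cst 1); rewrite cexpect_cst; apply.
Qed.

Lemma normc_cexpect_mul_sub X Y : cbounded X -> cbounded Y ->
  (forall w, normc (X w) <= 1) -> (forall w, normc (Y w) <= 1) ->
  forall δ : R, 0 < δ ->
  normc (cexpect P (fun w => X w * Y w) - cexpect P X) <=
    (1 + δ^-1) * normc (cexpect P Y - 1) + δ * normc (cexpect P X - 1).
Proof.
move=> bX bY X1 Y1 δ δ0; have b1 := cbounded_cst 1.
set x := cexpect P X; set y := cexpect P Y; set z := cexpect P _.
pose g w := δ%:C * (1 - X w) + δ^-1%:C * (1 - Y w).
have bZ (u : R[i]) V : cbounded V -> cbounded (fun w => u * (1 - V w)).
  by move=> bV; apply: cboundedM (cbounded_cst _) (cboundedB b1 bV).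
have bg : cbounded g := cboundedD (bZ _ _ bX) (bZ _ _ bY).
have Euv : cexpect P (fun w => (X w - 1) * (Y w - 1)) = z - x - (y - 1).
  rewrite (_ : (fun w => _) = fun w => (X w * Y w - X w) - (Y w - 1)).
    have bXY := cboundedM bX bY.
    rewrite !cexpectB ?cexpect_cst //;
      by [exact: cboundedB bXY bX | exact: cboundedB bY b1].
  by apply: funext => w; ring.
have Eg : cexpect P g = δ%:C * (1 - x) + δ^-1%:C * (1 - y).
  rewrite cexpectD ?cexpectZ ?cexpectB ?cexpect_cst //;
    by [exact: cboundedB b1 bY | exact: cboundedB b1 bX | exact: bZ].
have huv : normc (z - x - (y - 1)) <= δ * normc (x - 1) + δ^-1 * normc (y - 1).
  rewrite -Euv; apply: le_trans (normc_cexpect_le _ bg _) _.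
  - exact: cboundedM (cboundedB bX b1) (cboundedB bY b1).
  - move=> w; rewrite ReD !Re_realM -[1 - X w]opprB -[1 - Y w]opprB !ReN.
    by apply: normc_mul_le_Re; rewrite // addrC subrK.
  rewrite Eg ReD !Re_realM; apply: lerD; apply: ler_wpM2l;
    rewrite ?invr_ge0 ?(ltW δ0) // -normcN opprB; exact: Re_le_normc.
have := le_normcD (z - x - (y - 1)) (y - 1); rewrite subrK; lra.
Qed.

End ComplexExpectation.

Lemma norm_subrXX_le (K : numDomainType) (u v : K) (m : nat) :
  `|u| <= 1 -> `|v| <= 1 -> `|u ^+ m - v ^+ m| <= m%:R * `|u - v|.
Proof.
move=> u1 v1; rewrite subrXX normrM mulrC ler_wpM2r //.
apply: le_trans (ler_norm_sum _ _ _) _.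
rewrite -[m in m%:R]card_ord -sum1_card natr_sum; apply: ler_sum => i _.
by rewrite normrM !normrX mulr_ile1 ?exprn_ile1 ?exprn_ge0.
Qed.

Section Asymptotics.
Variable R : realType.

Lemma le_scaled_normC (u : R[i]) (r s : R) :
  (`|u| <= r%:C * `|s%:C|) = (normc u <= r * `|s|).
Proof. by rewrite !norm_normc normc_real -rmorphM lecR. Qed.

Lemma normc_subrXX_le (u v : R[i]) (m : nat) :
  normc u <= 1 -> normc v <= 1 -> normc (u ^+ m - v ^+ m) <= m%:R * normc (u - v).
Proof.
move=> u1 v1; rewrite -lecR rmorphM rmorph_nat -!norm_normc.
by apply: norm_subrXX_le; rewrite norm_normc lecR.
Qed.

Lemma littleo_seq_powdiff (x y z : nat -> R[i]) (k : nat -> int) :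
  (fun n => (k n)%:~R : R) @ \oo --> +oo ->
  (forall n, normc (x n) <= 1) -> (forall n, normc (z n) <= 1) ->
  (forall n (δ : R), 0 < δ ->
     normc (z n - x n) <= (1 + δ^-1) * normc (y n - 1) + δ * normc (x n - 1)) ->
  bigO_seq (fun n => x n - 1) (fun n => ((k n)%:~R : R)^-1) ->
  littleo_seq (fun n => y n - 1) (fun n => ((k n)%:~R : R)^-1) ->
  littleo_seq (fun n => z n ^ k n - x n ^ k n) (fun _ => 1).
Proof.
move=> hk x1 z1 zx [C hC] hy eps eps0.
pose δ := eps / (2 * (`|C| + 1)).
have δ0 : 0 < δ by rewrite divr_gt0 // mulr_gt0 // ltr_wpDl.
pose η := eps / (2 * (1 + δ^-1)).
have η0 : 0 < η by rewrite divr_gt0 // mulr_gt0 // ltr_wpDr ?invr_ge0 ?ltW.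
have hη := hy η η0.
near=> n.
have k1 : 1 <= ((k n)%:~R : R) by near: n; exact: cvgry_ge.
have hxn : normc (x n - 1) <= C * `|(k n)%:~R^-1| by rewrite -le_scaled_normC; near: n.
have hyn : normc (y n - 1) <= η * `|(k n)%:~R^-1| by rewrite -le_scaled_normC; near: n.
rewrite le_scaled_normC normr1 mulr1.
case: (k n) k1 hxn hyn => m k1 hxn hyn; last first.
  by move: k1; rewrite -[(Negz m)%:~R]/(- (m.+1)%:R : R); have := ler0n R m.+1; lra.
rewrite -[(Posz m)%:~R]/(m%:R : R) in k1 hxn hyn.
have m0 : 0 < (m%:R : R) by exact: lt_le_trans ltr01 k1.
rewrite gtr0_norm ?invr_gt0 // in hxn hyn.
have Ax : m%:R * normc (x n - 1) <= `|C|.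
  rewrite -(ler_pM2l m0) in hxn; rewrite (le_trans hxn) //.
  by rewrite mulrCA divff ?gt_eqF // mulr1 ler_norm.
have Ay : m%:R * normc (y n - 1) <= η.
  rewrite -(ler_pM2l m0) in hyn; rewrite (le_trans hyn) //.
  by rewrite mulrCA divff ?gt_eqF // mulr1.
rewrite -[_ ^ Posz m]/(_ ^+ m) -[x n ^ Posz m]/(x n ^+ m).
apply: le_trans (normc_subrXX_le m (z1 n) (x1 n)) _.
apply: le_trans (ler_wpM2l (ltW m0) (zx n δ δ0)) _.
have δi0 : 0 < δ^-1 by rewrite invr_gt0.
rewrite mulrDr !(mulrCA m%:R).
apply: le_trans (lerD (ler_wpM2l _ Ay) (ler_wpM2l (ltW δ0) Ax)) _; first lra.
have Eη : (1 + δ^-1) * η = eps / 2.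
  by rewrite /η; field; rewrite lt0r_neq0 //; lra.
have Eδ : δ * `|C| + δ = eps / 2.
  by rewrite /δ; field; rewrite lt0r_neq0 //; lra.
lra.
Unshelve. all: by end_near.
Qed.

End Asymptotics.

Theorem lemmaA3 (R : realType) (d : measure_display) (T : measurableType d)
  (P : probability T R) (a b c e : nat -> {RV P >-> R}) (k : nat -> int)
  (hc : forall n, {ae P, forall w, 0 <= c n w})
  (he : forall n, {ae P, forall w, 0 <= e n w})
  (hk : (fun n => (k n)%:~R : R) @ \oo --> +oo) :
  let X := fun n w => cexpi (a n w) (c n w) in
  let Y := fun n w => cexpi (b n w) (e n w) in
  let x := fun n => cexpect P (X n) in
  let y := fun n => cexpect P (Y n) in
  let z := fun n => cexpect P (fun w => X n w * Y n w) in
  bigO_seq (fun n => x n - 1) (fun n => ((k n)%:~R : R)^-1) ->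
  littleo_seq (fun n => y n - 1) (fun n => ((k n)%:~R : R)^-1) ->
  bigO_seq (fun n => z n - 1) (fun n => ((k n)%:~R : R)^-1) ->
  littleo_seq (fun n => z n ^ k n - x n ^ k n) (fun _ => 1).
Proof.
move=> X Y x y z hx hy _.
(* c and e are nonnegative only almost surely: truncating them at 0 makes X and Y bounded
   without changing the expectations. *)
pose pos (f : {RV P >-> R}) w := Order.max (f w) 0.
have mpos f : measurable_fun setT (pos f).
  exact: measurable_realfun.measurable_maxr (measurable_funP f) (measurable_cst _).
have pos_ge0 f w : 0 <= pos f w by rewrite /pos le_max lexx orbT.
pose X' n w := cexpi (a n w) (pos (c n) w).
pose Y' n w := cexpi (b n w) (pos (e n) w).
have bX n : cbounded (X' n) := cbounded_cexpi (measurable_funP _) (mpos _) (pos_ge0 _).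
have bY n : cbounded (Y' n) := cbounded_cexpi (measurable_funP _) (mpos _) (pos_ge0 _).
have X1 n w : normc (X' n w) <= 1 := normc_cexpi_le1 _ (pos_ge0 _ _).
have Y1 n w : normc (Y' n w) <= 1 := normc_cexpi_le1 _ (pos_ge0 _ _).
have mX n : cmeasurable (X n) := cmeasurable_cexpi (measurable_funP _) (measurable_funP _).
have mY n : cmeasurable (Y n) := cmeasurable_cexpi (measurable_funP _) (measurable_funP _).
have Ex n : x n = cexpect P (X' n).
  apply: cexpect_ae (mX n) (bX n).1 _.
  by apply: filterS (hc n) => w c0; rewrite /X' /pos max_l.
have Ey n : y n = cexpect P (Y' n).
  apply: cexpect_ae (mY n) (bY n).1 _.
  by apply: filterS (he n) => w e0; rewrite /Y' /pos max_l.
have Ez n : z n = cexpect P (fun w => X' n w * Y' n w).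
  apply: cexpect_ae (cmeasurableM (mX n) (mY n)) (cboundedM (bX n) (bY n)).1 _.
  by apply: filterS2 (hc n) (he n) => w c0 e0; rewrite /X' /Y' /pos !max_l.
apply: (littleo_seq_powdiff hk _ _ _ hx hy) => n.
- by rewrite Ex; exact: normc_cexpect_le1.
- rewrite Ez; apply: normc_cexpect_le1 (cboundedM (bX n) (bY n)) _ => w.
  by rewrite normcM mulr_ile1 ?normc_ge0.
- by move=> δ δ0; rewrite Ex Ey Ez; exact: normc_cexpect_mul_sub.
Qed.
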